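(* Let $G$, $k\ge 3$, the choice strings $c_{i,j}$, $L=k+1$ and $d=k-2$ be as in the construction in the context, and let $s$ be a string of length $L$ such that every choice string $c_{i,j}$ ($1\le i<j\le k$) has a substring of length $L$ at Hamming distance at most $d$ from $s$. Then $s$ contains at least two encoding symbols and at least one occurrence of the synchronizing symbol $\#$.
   Context: Let $G=(V,E)$ be an undirected simple graph with $V=\{v_1,\dots,v_n\}$ and edge set $E=\{e_1,\dots,e_m\}$, and let $k\ge 3$ be an integer; put $N=\binom{k}{2}$. The alphabet consists of pairwise distinct symbols: encoding symbols $\sigma_1,\dots,\sigma_n$, string identification symbols $\varphi_1,\dots,\varphi_N$, and a synchronizing symbol $\#$. Order the pairs $(i,j)$ with $1\le i<j\le k$ lexicographically, $(1,2),(1,3),\dots,(1,k),(2,3),\dots,(k-1,k)$, and let $i'$ denote the position of $(i,j)$ in this order. For an edge $e$ joining $v_r$ and $v_s$ with $r<s$ define $\mathrm{block}(i,j,e)=\varphi_{i'}^{\,i-1}\,\sigma_r\,\varphi_{i'}^{\,j-i-1}\,\sigma_s\,\varphi_{i'}^{\,k-j}\,\#$ (a string of length $k+1$), and the choice string $c_{i,j}=\mathrm{block}(i,j,e_1)\,\varphi_{i'}^{\,k}\,\mathrm{block}(i,j,e_2)\,\varphi_{i'}^{\,k}\cdots\varphi_{i'}^{\,k}\,\mathrm{block}(i,j,e_m)$. Set $L=k+1$ and $d=k-2$. *)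

From HB Require Import structures.
From mathcomp Require Import all_boot.
Set Implicit Arguments. Unset Strict Implicit. Unset Printing Implicit Defensive.

(* The alphabet: encoding symbols sigma_r, string identification symbols
   phi_p, and the synchronizing symbol #.  Pairwise distinct by construction. *)
Inductive symbol : Type :=
| Enc of nat
| Phi of nat
| Hash.

Definition symbol_eqb (a b : symbol) : bool :=
  match a, b with
  | Enc x, Enc y => x == y
  | Phi x, Phi y => x == y
  | Hash, Hash => true
  | _, _ => false
  end.

Lemma symbol_eqP : Equality.axiom symbol_eqb.
Proof.
case=> [x|x|] [y|y|] /=; try by constructor.
- by apply: (iffP eqP) => [->|[]].
- by apply: (iffP eqP) => [->|[]].
Qed.

HB.instance Definition _ := hasDecEq.Build symbol symbol_eqP.

Definition is_enc (a : symbol) : bool := if a is Enc _ then true else false.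

Definition in_alphabet (n k : nat) (a : symbol) : bool :=
  match a with
  | Enc r => (1 <= r <= n)
  | Phi p => (1 <= p <= 'C(k, 2))
  | Hash => true
  end.

Definition pairs (k : nat) : seq (nat * nat) :=
  [seq (i, j) | i <- iota 1 k, j <- iota i.+1 (k - i)].

(* i' : the (1-based) position of (i,j) in the above order. *)
Definition pair_pos (k i j : nat) : nat := (index (i, j) (pairs k)).+1.

(* block(i,j,e) for the edge e = {v_r, v_s}, r < s, given as the pair (r,s). *)
Definition block (k i j : nat) (e : nat * nat) : seq symbol :=
  let p := pair_pos k i j in
  nseq (i - 1) (Phi p) ++ [:: Enc e.1] ++ nseq (j - i - 1) (Phi p)
    ++ [:: Enc e.2] ++ nseq (k - j) (Phi p) ++ [:: Hash].

Fixpoint join_sep (sep : seq symbol) (l : seq (seq symbol)) : seq symbol :=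
  match l with
  | [::] => [::]
  | [:: x] => x
  | x :: l' => x ++ sep ++ join_sep sep l'
  end.

Definition choice_string (k : nat) (es : seq (nat * nat)) (i j : nat)
  : seq symbol :=
  join_sep (nseq k (Phi (pair_pos k i j))) [seq block k i j e | e <- es].

(* Hamming distance of two strings (used on strings of equal length). *)
Definition hamming (s t : seq symbol) : nat :=
  count (fun ab : symbol * symbol => ab.1 != ab.2) (zip s t).

Definition has_close_substring (L d : nat) (c s : seq symbol) : Prop :=
  exists p, p + L <= size c /\ hamming (take L (drop p c)) s <= d.

(* es encodes the edge set of a simple graph on v_1..v_n: each edge {v_r,v_s}
   is listed once as (r,s) with 1 <= r < s <= n. *)
Definition simple_edge_list (n : nat) (es : seq (nat * nat)) : Prop :=
  uniq es /\ all (fun e : nat * nat => (1 <= e.1) && (e.1 < e.2) && (e.2 <= n)) es.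

From mathcomp Require Import all_boot zify.

(* A window of length k+1 of c_{i,j} holds at most two encoding symbols and at
   most one #, because these occur at fixed residues modulo the period 2k+1 of
   c_{i,j}; its other letters are all phi_{i'}.  Being within distance k-2 of s,
   the window agrees with s in at least 3 positions, so s contains phi_{i'} at
   least 3 - min(e, 2) - min(h, 1) times, where e and h count the encoding
   symbols and the #'s of s.  This holds for each of the binom(k,2) >= k pairs
   (i,j), and s has only k+1 letters, so min(e, 2) + min(h, 1) = 3. *)

Set Implicit Arguments.
Unset Strict Implicit.
Unset Printing Implicit Defensive.

Definition is_phi (a : symbol) : bool := if a is Phi _ then true else false.

Lemma count_symbol_kinds (s : seq symbol) :
  count is_enc s + count (pred1 Hash) s + count is_phi s = size s.
Proof. by elim: s => [|[x|x|] s IH] //=; rewrite -IH !add0n ?add1n ?addSn ?addnS. Qed.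

Lemma count_agree_le (t : symbol) (w s : seq symbol) :
  all [pred a | is_enc a || (a == Hash) || (a == t)] w ->
  count (fun ab : symbol * symbol => ab.1 == ab.2) (zip w s) <=
    minn (count is_enc w) (count is_enc s)
    + minn (count (pred1 Hash) w) (count (pred1 Hash) s) + count (pred1 t) s.
Proof.
elim: w s => [|a w IH] [|b s] //= /andP[a_kind /(IH s) /= {}IH].
case: eqP => [<-|_] /=; last lia.
by case: a a_kind => [x|x|] /= => [_|/eqP->|_]; rewrite ?eqxx /=; lia.
Qed.

Lemma agreements_add_hamming (w s : seq symbol) : size w = size s ->
  count (fun ab : symbol * symbol => ab.1 == ab.2) (zip w s) + hamming w s = size s.
Proof. by move=> eq_size; rewrite count_predC size_zip eq_size minnn. Qed.

Lemma count_mod_iota_le1 m r {L P} :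
  L <= P -> count (fun q => q %% P == r) (iota m L) <= 1.
Proof.
move=> le_LP; rewrite -(count_map (modn^~ P) (pred1 r)) count_uniq_mem.
  by case: (_ \in _).
rewrite map_inj_in_uniq ?iota_uniq // => x y; rewrite !mem_iota => x_in y_in eq_mod.
rewrite (divn_eq x P) (divn_eq y P) eq_mod; congr (_ * _ + _).
move: x_in y_in; rewrite (divn_eq x P) (divn_eq y P) eq_mod.
by have [lt_q|lt_q|-> //] := ltngtP (x %/ P) (y %/ P);
  have := leq_mul lt_q (leqnn P); rewrite mulSn; lia.
Qed.

Lemma count_mem_uniq_ge (T : eqType) (V s : seq T) c :
  uniq V -> {in V, forall v, c <= count_mem v s} -> size V * c <= count (mem V) s.
Proof.
elim: V => [|v V IH] //= /andP[vNV uniq_V] count_ge.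
have disj : count (predI (pred1 v) (mem V)) s = 0.
  apply/eqP; rewrite -leqn0 -(count_pred0 s).
  by apply: sub_count => x /andP[/eqP-> v_in]; case/negP: vNV.
rewrite mulSn (eq_count (a2 := predU (pred1 v) (mem V))) => [|x]; last by rewrite !inE.
rewrite -[X in _ <= X]addn0 -disj count_predUI.
rewrite leq_add ?count_ge ?mem_head // IH // => u u_in.
by rewrite count_ge // inE u_in orbT.
Qed.

Section ChoiceString.

Variables (k i j : nat) (es : seq (nat * nat)).
Hypotheses (i_gt0 : 0 < i) (lt_ij : i < j) (j_le_k : j <= k).

Let phi := Phi (pair_pos k i j).
Let c := choice_string k es i j.
Let P := k.+1 + k.

Lemma size_block e : size (block k i j e) = k.+1.
Proof. by rewrite /block !size_cat !size_nseq /=; lia. Qed.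

Lemma nth_block x0 e r : r <= k ->
  nth x0 (block k i j e) r =
    if r == i.-1 then Enc e.1 else if r == j.-1 then Enc e.2
    else if r == k then Hash else phi.
Proof.
move=> le_rk; rewrite /block !(nth_cat, size_nseq, nth_seq1, nth_nseq) /=.
by repeat case: ifP => //; lia.
Qed.

Lemma nth_choice_string x0 q : q < size c ->
  nth x0 c q =
    if q %% P <= k then nth x0 (block k i j (nth (0, 0) es (q %/ P))) (q %% P)
    else phi.
Proof.
rewrite /c /P; elim: es q => [|e [|e' es'] IH] q //.
  by rewrite /= size_block => lt_qk; rewrite modn_small ?divn_small ?ifT //; lia.
have -> : choice_string k [:: e, e' & es'] i j =
    block k i j e ++ nseq k phi ++ choice_string k (e' :: es') i j by [].
rewrite size_cat size_block size_cat size_nseq => lt_q.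
rewrite nth_cat size_block; case: ifPn => [lt_qk|ge_qk].
  by rewrite modn_small ?divn_small ?ifT //; lia.
rewrite nth_cat size_nseq nth_nseq; case: ifPn => [lt_qP|ge_qP].
  by rewrite lt_qP /= modn_small ?ifF //; lia.
have [q' def_q] : exists q', q = q' + (k.+1 + k).
  by exists (q - (k.+1 + k)); lia.
rewrite def_q -subnDA addnK modnDr divnDr // divnn addn1 IH //.
by rewrite def_q in lt_q; lia.
Qed.

(* With default [phi], positions past the end of [c] need no special case. *)
Lemma nth_choice_string_kind q (a := nth phi c q) (r := q %% P) :
  [/\ is_enc a -> (r == i.-1) || (r == j.-1), a == Hash -> r == k
    & is_enc a || (a == Hash) || (a == phi)].
Proof.
have [lt_q|ge_q] := ltnP q (size c); last by rewrite /a nth_default ?eqxx ?orbT.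
rewrite /a /r nth_choice_string //; case: ifP => [le_rk|_]; last by rewrite eqxx orbT.
by rewrite nth_block //; repeat case: ifP => //=; rewrite ?eqxx ?orbT.
Qed.

Lemma window_kinds p : p + k.+1 <= size c ->
  let w := take k.+1 (drop p c) in
  [/\ count is_enc w <= 2, count (pred1 Hash) w <= 1
    & all [pred a | is_enc a || (a == Hash) || (a == phi)] w].
Proof.
move=> le_p /=; rewrite -(map_nth_iota phi); last by lia.
have le_LP : k.+1 <= P by rewrite /P leq_addr.
rewrite !count_map all_map; split.
- pose at_res r q := q %% P == r.
  apply: leq_trans (sub_count (a2 := predU (at_res i.-1) (at_res j.-1)) _ _) _.
    by move=> q; case: (nth_choice_string_kind q).
  have := count_predUI (at_res i.-1) (at_res j.-1) (iota p k.+1).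
  have := count_mod_iota_le1 p i.-1 le_LP; have := count_mod_iota_le1 p j.-1 le_LP.
  rewrite /at_res; lia.
- apply: leq_trans (count_mod_iota_le1 p k le_LP).
  by apply: sub_count => q; case: (nth_choice_string_kind q).
- by apply/allP => q _; case: (nth_choice_string_kind q).
Qed.

Lemma close_substring_phi_count s :
  size s = k.+1 -> has_close_substring k.+1 (k - 2) c s ->
  3 <= minn (count is_enc s) 2 + minn (count (pred1 Hash) s) 1 + count (pred1 phi) s.
Proof.
move=> size_s [p [le_p close]].
have [enc_w hash_w kinds_w] := window_kinds le_p.
set w := take k.+1 (drop p c) in enc_w hash_w kinds_w close.
have size_w : size w = k.+1 by rewrite size_takel // size_drop; lia.
have := agreements_add_hamming (etrans size_w (esym size_s)).
have := count_agree_le s kinds_w.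
lia.
Qed.

End ChoiceString.

Lemma mem_pairs k i j : ((i, j) \in pairs k) = [&& 0 < i, i < j & j <= k].
Proof.
apply/allpairsPdep/and3P => [[i' [j' [+ + [-> ->]]]]|[i_gt0 lt_ij j_le_k]].
  by rewrite !mem_iota => /andP[? ?] /andP[? ?]; split; lia.
by exists i, j; rewrite !mem_iota; split=> //; lia.
Qed.

Lemma uniq_pairs k : uniq (pairs k).
Proof.
rewrite allpairs_uniq_dep ?iota_uniq // => [i _|[i1 j1] [i2 j2] _ _ /= [eq_i]].
  exact: iota_uniq.
by move: j1; rewrite eq_i => j1 ->.
Qed.

Definition pair_symbols k := [seq Phi (pair_pos k x.1 x.2) | x <- pairs k].

Lemma uniq_pair_symbols k : uniq (pair_symbols k).
Proof.
rewrite map_inj_in_uniq ?uniq_pairs // => [[i1 j1] [i2 j2]] x_in y_in [].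
exact: index_inj.
Qed.

Lemma size_pair_symbols k : 2 < k -> k <= size (pair_symbols k).
Proof.
rewrite size_map; case: k => [|[|[|k]]] // _.
by rewrite size_allpairs_dep /= !size_iota; lia.
Qed.


Theorem lemma1 (n k : nat) (es : seq (nat * nat)) (s : seq symbol) :
  simple_edge_list n es ->
  3 <= k ->
  all (in_alphabet n k) s ->
  size s = k.+1 ->
  (forall i j, 1 <= i -> i < j -> j <= k ->
     has_close_substring k.+1 (k - 2) (choice_string k es i j) s) ->
  2 <= count is_enc s /\ Hash \in s.
Proof.
move=> _ k_ge3 _ size_s close.
set E := count is_enc s; set H := count (pred1 Hash) s.
have phi_count_ge :
    {in pair_symbols k, forall v, 3 - (minn E 2 + minn H 1) <= count_mem v s}.
  move=> _ /mapP[[i j] + ->]; rewrite mem_pairs => /and3P[i_gt0 lt_ij j_le_k].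
  by rewrite leq_subLR; apply: close_substring_phi_count; last exact: close.
have phi_total : k * (3 - (minn E 2 + minn H 1)) <= count is_phi s.
  apply: leq_trans (leq_mul (size_pair_symbols k_ge3) (leqnn _)) _.
  apply: leq_trans (count_mem_uniq_ge (uniq_pair_symbols k) phi_count_ge) _.
  by apply: sub_count => _ /mapP[x _ ->].
have := count_symbol_kinds s; rewrite -has_pred1 has_count size_s -/E -/H.
nia.
Qed.
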